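(* In the setting below, let $F:\widehat{A}\to\widehat{A}'$ and $G:\widehat{A}'\to\widehat{A}''$ be $\mathcal{A}_\infty$-morphisms with $F_n=G_n=0$ for $n>2$ and with $F_2=0$ or $G_2=0$. Then \[ (G\circ F)\boxtimes\mathrm{id}_{DD}=(G\boxtimes\mathrm{id}_{DD})\circ(F\boxtimes\mathrm{id}_{DD}). \]
   Context: $\mathcal{I}=\mathbb{Z}e_1\times\cdots\times\mathbb{Z}e_k$; $\mathcal{B},\mathcal{B}'$ differential bigraded algebras over $\mathcal{I}$ (bigraded by intrinsic and homological degree $\deg_h$, degree-$(0,0)$ part $\mathcal{I}$, differential $\mu_1$ of bidegree $(0,1)$, $\mu_1^2=0$, $\mu_1(xy)=(-1)^{\deg_hy}\mu_1(x)y+x\mu_1(y)$, multiplication $\mu_2$). $\widehat{A},\widehat{A}',\widehat{A}''$ are right dg $\mathcal{B}$-modules (differential $m_1$ of bidegree $(0,1)$, $m_1^2=0$, $m_1(xb)=(-1)^{\deg_hb}m_1(x)b+x\mu_1(b)$, action $m_2$), free over $\mathbb{Z}$ with bases of homogeneous elements with unique right idempotents. $|\mathrm{id}|$ multiplies by $(-1)^{\deg_h}$. $\widehat{DD}=\mathcal{I}$ is a rank-one Type DD bimodule with $\delta_{DD}(1)=\sum_sa_s\otimes c_s^{op}\in\mathcal{B}\otimes_{\mathcal{I}}(\mathcal{B}')^{op}$ of bidegree $(0,1)$ satisfying $\sum_s(-1)^{\deg_hc_s}\mu_1(a_s)\otimes c_s^{op}+\sum_sa_s\otimes\mu_1(c_s)^{op}+\sum_{s,t}(-1)^{\deg_h(a_t)\deg_h(c_s)}a_sa_t\otimes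 c_t^{op}c_s^{op}=0$. $\widehat{A}\boxtimes\widehat{DD}$ is the Type D structure over $\mathcal{B}'$ on $\widehat{A}$ with $\delta(x)=1\otimes m_1(x)+\sum_s(-1)^{\deg_h(xa_s)\deg_h(c_s)}c_s\otimes xa_s$. An $\mathcal{A}_\infty$-morphism $F$ with $F_n=0$ for $n>2$: bigrading-preserving $\mathcal{I}$-linear $F_1$ and $\mathcal{I}$-linear $F_2:\widehat{A}\otimes_{\mathcal{I}}\mathcal{B}\to\widehat{A}'$ (intrinsic-degree preserving, lowering $\deg_h$ by one) with $m_1'F_1=F_1m_1$, $m_1'F_2+m_2'(F_1\otimes\mathrm{id})=F_1m_2-F_2(m_1\otimes|\mathrm{id}|)-F_2(\mathrm{id}\otimes\mu_1)$, $-m_2'(F_2\otimes|\mathrm{id}|)=F_2(m_2\otimes\mathrm{id})-F_2(\mathrm{id}\otimes\mu_2)$. Composition of $\mathcal{A}_\infty$-morphisms: $(G\circ F)_n=\sum_{i+j=n+1}(-1)^{(i+1)(j+1)}G_i\circ(F_j\otimes|\mathrm{id}|^{(j+1)\otimes(i-1)})$; under the hypotheses this gives $(G\circ F)_1=G_1F_1$, $(G\circ F)_2=G_1F_2+G_2(F_1\otimes\mathrm{id})$, and $(G\circ F)_n=0$ for $n>2$. $F\boxtimes\mathrm{id}_{DD}:\widehat{A}\to\mathcal{B}'\otimes\widehat{A}'$ is $x\mapsto1\otimes F_1(x)+\sum_s(-1)^{\deg_h(c_s)(1+\deg_hF_2(x\otimes a_s))}c_s\otimes F_2(x\otimes a_s)$.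 Composition of Type D morphisms $\Phi:D\to\mathcal{B}'\otimes D'$, $\Psi:D'\to\mathcal{B}'\otimes D''$ is $\Psi\circ\Phi:=(\mu_2\otimes\mathrm{id})\circ(\mathrm{id}\otimes\Psi)\circ\Phi$. *)

From HB Require Import structures.
From mathcomp Require Import all_boot all_order all_algebra.
Set Implicit Arguments. Unset Strict Implicit. Unset Printing Implicit Defensive.
Import GRing.Theory Num.Theory.
Local Open Scope ring_scope.

Definition sgnz (n : int) : int := (-1) ^+ (odd (absz n)).

Definition additive_fun (U W : zmodType) (f : U -> W) : Prop :=
  forall u v, f (u + v) = f u + f v.

(* A bigrading (intrinsic degree in Gr, homological degree in int) on V:
   h g n v  <->  v lies in the homogeneous component of bidegree (g,n).
   The components are subgroups and V is their direct sum.
   dh is the homological degree, which is only meaningful (and pinned down)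
   on nonzero homogeneous elements. *)
Definition bigraded (Gr V : zmodType) (h : Gr -> int -> V -> Prop)
    (dh : V -> int) : Prop :=
  (forall g n, h g n 0) /\
  (forall g n u v, h g n u -> h g n v -> h g n (u - v)) /\
  (forall v, exists s : seq ((Gr * int) * V),
      (forall p, p \in s -> h p.1.1 p.1.2 p.2) /\ v = \sum_(p <- s) p.2) /\
  (forall s : seq ((Gr * int) * V), uniq (map fst s) ->
      (forall p, p \in s -> h p.1.1 p.1.2 p.2) ->
      \sum_(p <- s) p.2 = 0 -> forall p, p \in s -> p.2 = 0) /\
  (forall g n v, h g n v -> v != 0 -> dh v = n).

(* Differential bigraded algebra over I = Z e_1 x ... x Z e_k
   (the e i are orthogonal idempotents summing to 1, Z-independent,
   spanning the degree-(0,0) part). *)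
Definition dg_alg_over_I (k : nat) (Gr : zmodType) (B : nzRingType)
    (e : 'I_k -> B) (h : Gr -> int -> B -> Prop) (dh : B -> int)
    (mu1 : B -> B) : Prop :=
  bigraded h dh /\
  (forall g n g' n' a b, h g n a -> h g' n' b -> h (g + g') (n + n') (a * b)) /\
  (forall a, h 0 0 a <-> exists z : 'I_k -> int, a = \sum_i (e i *~ z i)) /\
  (forall i j, e i * e j = if i == j then e i else 0) /\
  \sum_i e i = 1 /\
  (forall z : 'I_k -> int, \sum_i (e i *~ z i) = 0 -> forall i, z i = 0) /\
  additive_fun mu1 /\
  (forall g n a, h g n a -> h g (n + 1) (mu1 a)) /\
  (forall a, mu1 (mu1 a) = 0) /\
  (forall g n x y, h g n y ->
      mu1 (x * y) = (mu1 x * y) *~ sgnz (dh y) + x * mu1 y).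

(* Right dg module over (B, mu1), free over Z with a basis of homogeneous
   elements each having a unique right idempotent. *)
Definition dg_module (k : nat) (Gr : zmodType) (B : nzRingType)
    (e : 'I_k -> B) (hB : Gr -> int -> B -> Prop) (dB : B -> int)
    (mu1 : B -> B) (A : zmodType) (act : A -> B -> A)
    (h : Gr -> int -> A -> Prop) (dh : A -> int) (m1 : A -> A) : Prop :=
  bigraded h dh /\
  (forall x, additive_fun (act x)) /\ (forall b, additive_fun (act^~ b)) /\
  (forall x, act x 1 = x) /\ (forall x a b, act (act x a) b = act x (a * b)) /\
  (forall g n g' n' x b, h g n x -> hB g' n' b -> h (g + g') (n + n') (act x b)) /\
  additive_fun m1 /\
  (forall g n x, h g n x -> h g (n + 1) (m1 x)) /\
  (forall x, m1 (m1 x) = 0) /\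
  (forall g n x b, hB g n b ->
      m1 (act x b) = act (m1 x) b *~ sgnz (dB b) + act x (mu1 b)) /\
  (exists basis : A -> Prop,
     (forall x, basis x -> exists g n, h g n x) /\
     (forall x, basis x -> exists! i : 'I_k, act x (e i) = x) /\
     (forall v, exists s : seq (int * A),
         (forall p, p \in s -> basis p.2) /\ v = \sum_(p <- s) (p.2 *~ p.1)) /\
     (forall s : seq (int * A), uniq (map snd s) ->
         (forall p, p \in s -> basis p.2) ->
         \sum_(p <- s) (p.2 *~ p.1) = 0 -> forall p, p \in s -> p.1 = 0)).

(* Equality of two formal sums  sum u_i (x) w_i  in the tensor product
   U (x)_I W, where ru i (resp. lw i) is the right (resp. left) action of the
   idempotent e_i.  Characterised by the universal property: equality after
   every I-balanced biadditive map. *)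
Definition tens_eq (k : nat) (U W : zmodType) (ru : 'I_k -> U -> U)
    (lw : 'I_k -> W -> W) (s1 s2 : seq (U * W)) : Prop :=
  forall (T : zmodType) (beta : U -> W -> T),
    (forall u, additive_fun (beta u)) -> (forall w, additive_fun (beta^~ w)) ->
    (forall i u w, beta (ru i u) w = beta u (lw i w)) ->
    \sum_(p <- s1) beta p.1 p.2 = \sum_(p <- s2) beta p.1 p.2.

(* Rank-one type DD bimodule I with delta(1) = sum_s a_s (x) c_s^op,
   given as the list d of pairs (a_s, c_s). *)
Definition DD_ok (k : nat) (Gr : zmodType) (B B' : nzRingType)
    (e : 'I_k -> B) (hB : Gr -> int -> B -> Prop) (dB : B -> int) (mu1 : B -> B)
    (e' : 'I_k -> B') (hB' : Gr -> int -> B' -> Prop) (dB' : B' -> int)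
    (mu1' : B' -> B') (d : seq (B * B')) : Prop :=
  (forall p, p \in d -> exists g n, hB g n p.1 /\ hB' (- g) (1 - n) p.2) /\
  tens_eq (fun i a => a * e i) (fun i c => c * e' i)
    ([seq (mu1 p.1 *~ sgnz (dB' p.2), p.2) | p <- d] ++
     [seq (p.1, mu1' p.2) | p <- d] ++
     [seq ((p.1 * q.1) *~ sgnz (dB q.1 * dB' p.2), p.2 * q.2) | p <- d, q <- d])
    [::].

(* A_oo-morphism F : A -> A' with F_n = 0 for n > 2, given by F1, F2
   (F2 x b stands for F_2(x (x) b)). *)
Definition ainf_morph2 (k : nat) (Gr : zmodType) (B : nzRingType)
    (e : 'I_k -> B) (hB : Gr -> int -> B -> Prop) (dB : B -> int) (mu1 : B -> B)
    (A : zmodType) (act : A -> B -> A) (h : Gr -> int -> A -> Prop) (m1 : A -> A)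
    (A' : zmodType) (act' : A' -> B -> A') (h' : Gr -> int -> A' -> Prop)
    (m1' : A' -> A') (F1 : A -> A') (F2 : A -> B -> A') : Prop :=
  additive_fun F1 /\
  (forall g n x, h g n x -> h' g n (F1 x)) /\
  (forall x i, F1 (act x (e i)) = act' (F1 x) (e i)) /\
  (forall x, additive_fun (F2 x)) /\ (forall b, additive_fun (F2^~ b)) /\
  (forall x i b, F2 (act x (e i)) b = F2 x (e i * b)) /\
  (forall x i b, F2 x (b * e i) = act' (F2 x b) (e i)) /\
  (forall g n g' n' x b, h g n x -> hB g' n' b -> h' (g + g') (n + n' - 1) (F2 x b)) /\
  (forall x, m1' (F1 x) = F1 (m1 x)) /\
  (forall g n x b, hB g n b ->
      m1' (F2 x b) + act' (F1 x) b =
      F1 (act x b) - F2 (m1 x) (b *~ sgnz (dB b)) - F2 x (mu1 b)) /\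
  (forall g n x b c, hB g n c ->
      - act' (F2 x b) (c *~ sgnz (dB c)) = F2 (act x b) c - F2 x (b * c)).

Definition ainf_comp1 (A A' A'' : Type) (G1 : A' -> A'') (F1 : A -> A') :=
  fun x => G1 (F1 x).
Definition ainf_comp2 (B : nzRingType) (A A' A'' : zmodType)
    (G1 : A' -> A'') (G2 : A' -> B -> A'') (F1 : A -> A') (F2 : A -> B -> A') :=
  fun x b => G1 (F2 x b) + G2 (F1 x) b.

(* F (box) id_DD : A -> B' (x) A', as a formal sum, for homogeneous x. *)
Definition box_id (B B' : nzRingType) (A A' : zmodType) (dB' : B' -> int)
    (dA' : A' -> int) (d : seq (B * B')) (F1 : A -> A') (F2 : A -> B -> A')
    (x : A) : seq (B' * A') :=
  (1, F1 x) ::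
  [seq (p.2 *~ sgnz (dB' p.2 * (1 + dA' (F2 x p.1))), F2 x p.1) | p <- d].

(* Composition of type D morphisms: (mu2 (x) id) o (id (x) Psi) o Phi. *)
Definition compD (B' : nzRingType) (D D' D'' : Type)
    (Psi : D' -> seq (B' * D'')) (Phi : D -> seq (B' * D')) (x : D)
    : seq (B' * D'') :=
  flatten [seq [seq (p.1 * q.1, q.2) | q <- Psi p.2] | p <- Phi x].

From mathcomp Require Import all_boot all_order all_algebra.
Local Open Scope ring_scope.
Import GRing.Theory.

(* The summand
   [1 (x) F1 x] of [F box id], fed into [G box id], produces all of
   [(G o F) box id] except the [G1 F2] terms, while the summands
   [c_s (x) F2 (x (x) a_s)] produce [c_s (x) G1 F2] and [c_s c_t (x) G2 F2]
   terms.  If [F2 = 0] the extra terms vanish; if [G2 = 0] the [G1 F2] terms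
   appear on both sides, with the same sign because [G1] preserves the
   homological degree. *)

Lemma additive_fun0 {U W : zmodType} {f : U -> W} : additive_fun f -> f 0 = 0.
Proof. by move=> f_add; apply: (addrI (f 0)); rewrite -f_add !addr0. Qed.

Lemma bigraded_dhE {Gr V : zmodType} {h : Gr -> int -> V -> Prop} {dh : V -> int}
    {g n v} : bigraded h dh -> h g n v -> v != 0 -> dh v = n.
Proof. by case=> _ [_ [_ [_ dhE]]]; apply: dhE. Qed.

Lemma dh_map_homogeneous {Gr V W : zmodType}
    {hV : Gr -> int -> V -> Prop} {dV : V -> int}
    {hW : Gr -> int -> W -> Prop} {dW : W -> int} {f : V -> W} {g n v} :
    bigraded hV dV -> bigraded hW dW -> additive_fun f ->
    (forall g n v, hV g n v -> hW g n (f v)) ->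
  hV g n v -> f v != 0 -> dW (f v) = dV v.
Proof.
move=> grV grW f_add f_hom hv fv_neq0.
have v_neq0 : v != 0.
  by apply: contraNneq fv_neq0 => ->; rewrite (additive_fun0 f_add).
by rewrite (bigraded_dhE grW (f_hom _ _ _ hv) fv_neq0) (bigraded_dhE grV hv v_neq0).
Qed.

Lemma sum_compD (B' : nzRingType) (D D' D'' : Type) (T : zmodType)
    (beta : B' -> D'' -> T) (Psi : D' -> seq (B' * D'')) (Phi : D -> seq (B' * D'))
    (x : D) :
  \sum_(p <- compD Psi Phi x) beta p.1 p.2 =
  \sum_(p <- Phi x) \sum_(q <- Psi p.2) beta (p.1 * q.1) q.2.
Proof. by rewrite big_flatten /= big_map; apply: eq_bigr => p _; rewrite big_map. Qed.

Section BoxIdSums.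

Variables (B B' : nzRingType) (A A' T : zmodType) (dB' : B' -> int)
  (dA' : A' -> int) (d : seq (B * B')) (F1 : A -> A') (F2 : A -> B -> A').

Lemma sum_box_id (beta : B' -> A' -> T) (x : A) :
  \sum_(p <- box_id dB' dA' d F1 F2 x) beta p.1 p.2 =
  beta 1 (F1 x) +
  \sum_(p <- d) beta (p.2 *~ sgnz (dB' p.2 * (1 + dA' (F2 x p.1)))) (F2 x p.1).
Proof. by rewrite big_cons big_map. Qed.

Variables (beta : B' -> A' -> T) (c : B').
Hypothesis beta_add : forall u, additive_fun (beta u).

Lemma sum_box_id_F2_zero (x : A) : (forall y b, F2 y b = 0) ->
  \sum_(p <- box_id dB' dA' d F1 F2 x) beta (c * p.1) p.2 = beta c (F1 x).
Proof.
move=> F20; rewrite big_cons big_map big1 ?mulr1 ?addr0 // => p _.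
by rewrite F20 (additive_fun0 (beta_add _)).
Qed.

Lemma sum_box_id_at0 (x : A) : x = 0 -> additive_fun F1 ->
    (forall b, additive_fun (F2^~ b)) ->
  \sum_(p <- box_id dB' dA' d F1 F2 x) beta (c * p.1) p.2 = 0.
Proof.
move=> -> F1_add F2_add; rewrite big_cons big_map big1 => [|p _].
  by rewrite (additive_fun0 F1_add) (additive_fun0 (beta_add _)) addr0.
by rewrite (additive_fun0 (F2_add _)) (additive_fun0 (beta_add _)).
Qed.

End BoxIdSums.

Arguments sum_box_id {B B' A A' T dB' dA' d F1 F2}.
Arguments sum_box_id_F2_zero {B B' A A' T dB' dA' d F1 F2 beta c} beta_add {x}.
Arguments sum_box_id_at0 {B B' A A' T dB' dA' d F1 F2 beta c} beta_add {x}.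

Theorem proposition6p51 (k : nat) (Gr : zmodType)
    (B : nzRingType) (e : 'I_k -> B) (hB : Gr -> int -> B -> Prop) (dB : B -> int)
    (mu1 : B -> B)
    (B' : nzRingType) (e' : 'I_k -> B') (hB' : Gr -> int -> B' -> Prop)
    (dB' : B' -> int) (mu1' : B' -> B')
    (A : zmodType) (act : A -> B -> A) (hA : Gr -> int -> A -> Prop)
    (dA : A -> int) (m1 : A -> A)
    (A' : zmodType) (act' : A' -> B -> A') (hA' : Gr -> int -> A' -> Prop)
    (dA' : A' -> int) (m1' : A' -> A')
    (A'' : zmodType) (act'' : A'' -> B -> A'') (hA'' : Gr -> int -> A'' -> Prop)
    (dA'' : A'' -> int) (m1'' : A'' -> A'')
    (d : seq (B * B'))
    (F1 : A -> A') (F2 : A -> B -> A') (G1 : A' -> A'') (G2 : A' -> B -> A'')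
    (HB : dg_alg_over_I e hB dB mu1)
    (HB' : dg_alg_over_I e' hB' dB' mu1')
    (HA : dg_module e hB dB mu1 act hA dA m1)
    (HA' : dg_module e hB dB mu1 act' hA' dA' m1')
    (HA'' : dg_module e hB dB mu1 act'' hA'' dA'' m1'')
    (HDD : DD_ok e hB dB mu1 e' hB' dB' mu1' d)
    (HF : ainf_morph2 e hB dB mu1 act hA m1 act' hA' m1' F1 F2)
    (HG : ainf_morph2 e hB dB mu1 act' hA' m1' act'' hA'' m1'' G1 G2)
    (H2 : (forall x b, F2 x b = 0) \/ (forall y b, G2 y b = 0)) :
  forall (g : Gr) (n : int) (x : A), hA g n x ->
    tens_eq (fun i (c : B') => c * e' i) (fun i (z : A'') => act'' z (e i))
      (box_id dB' dA'' d (ainf_comp1 G1 F1) (ainf_comp2 G1 G2 F1 F2) x)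
      (compD (box_id dB' dA'' d G1 G2) (box_id dB' dA' d F1 F2) x).
Proof.
move=> g n x hx T beta beta_add _ _.
have beta0 c : beta c 0 = 0 := additive_fun0 (beta_add c).
case: HF => _ [_ [_ [_ [_ [_ [_ [F2_hom _]]]]]]].
case: HG => G1_add [G1_hom [_ [_ [G2_add _]]]].
have G10 : G1 0 = 0 := additive_fun0 G1_add.
rewrite sum_compD (sum_box_id beta) big_cons big_map /ainf_comp1 /ainf_comp2 /=.
case: H2 => [F20 | G20].
- under [X in _ = X + _]eq_bigr do rewrite mul1r.
  rewrite (sum_box_id beta) [X in _ = _ + X]big1 ?addr0 => [|p _]; last first.
    by rewrite (sum_box_id_at0 beta_add (F20 _ _) G1_add G2_add).
  by congr (_ + _); apply: eq_bigr => p _; rewrite F20 G10 add0r.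
- rewrite (sum_box_id_F2_zero beta_add G20); congr (_ + _).
  apply: eq_big_seq => p pd; rewrite (sum_box_id_F2_zero beta_add G20).
  rewrite G20 addr0.
  have [->|G1F2_neq0] := eqVneq (G1 (F2 x p.1)) 0; first by rewrite !beta0.
  have [g' [n' [hp _]]] := HDD.1 p pd.
  by rewrite (dh_map_homogeneous HA'.1 HA''.1 G1_add G1_hom
    (F2_hom _ _ _ _ _ _ hx hp) G1F2_neq0).
Qed.
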